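(* For any term $t$, scalar $\alpha$, type $T$ and context $\Gamma$ of the Scalar type system: if $\Gamma\vdash\alpha.t:T$ then there exist a unit type $U$ and a scalar $\gamma\in\mathcal S$ such that $T\equiv\alpha.\gamma.U$.
   Context: Fix a commutative ring $(\mathcal{S},+,\times)$. Terms: $t,r ::= b \mid (t)\,r \mid \mathbf{0} \mid \alpha.t \mid t+r$, basis terms $b ::= x \mid \lambda x\,t$, modulo associativity and commutativity of $+$. Types: $T ::= U \mid \forall X.T \mid \alpha.T \mid \overline{0}$; unit types: $U ::= X \mid U\to T \mid \forall X.U$. Type variables are only substituted by unit types; $(\alpha.T)[U/X]=\alpha.T[U/X]$. Type equivalence $\equiv$ is the least congruence with $\alpha.\overline0\equiv\overline0$, $0.T\equiv\overline0$, $1.T\equiv T$, $\alpha.(\beta.T)\equiv(\alpha\times\beta).T$, $\forall X.\alpha.T\equiv\alpha.\forall X.T$. A context is a set of distinct term variables with unit types. Typing rules: (ax) $\Gamma,x:U\vdash x:U$; ($\equiv$) from $\Gamma\vdash t:T$ and $T\equiv S$ infer $\Gamma\vdash t:S$; ($\to_E$) from $\Gamma\vdash t:\alpha.(U\to T)$ and $\Gamma\vdash r:\beta.U$ infer $\Gamma\vdash (t)\,r:(\alpha\times\beta).T$; ($\to_I$) from $\Gamma,x:U\vdash t:T$ infer $\Gamma\vdash\lambda x\,t:U\to T$; ($\forall_E$) from $\Gamma\vdash t:\forall X.T$ infer $\Gamma\vdash t:T[U/X]$, $U$ unit; ($\forall_I$) from $\Gamma\vdash t:T$ with $X$ not free in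 $\Gamma$ infer $\Gamma\vdash t:\forall X.T$; ($ax_{\overline0}$) $\Gamma\vdash\mathbf 0:\overline0$; ($+_I$) from $\Gamma\vdash t:\alpha.T$ and $\Gamma\vdash r:\beta.T$ infer $\Gamma\vdash t+r:(\alpha+\beta).T$; ($s_I$) from $\Gamma\vdash t:T$ infer $\Gamma\vdash\alpha.t:\alpha.T$. *)

(* Scalar type system with scalars in a commutative ring.
   Binders (term variables and type variables) use de Bruijn indices. *)
From mathcomp Require Import all_boot all_algebra.
Set Implicit Arguments. Unset Strict Implicit. Unset Printing Implicit Defensive.
Import GRing.Theory.
Local Open Scope ring_scope.

Section Scalar.
Variable R : comPzRingType.

Inductive term : Type :=
| tVar : nat -> term
| tLam : term -> term
| tApp : term -> term -> term
| tZero : term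
| tScal : R -> term -> term
| tPlus : term -> term -> term.

(* Terms are taken modulo associativity and commutativity of + *)
Inductive term_ac : term -> term -> Prop :=
| ac_refl t : term_ac t t
| ac_sym t r : term_ac t r -> term_ac r t
| ac_trans t r s : term_ac t r -> term_ac r s -> term_ac t s
| ac_lam t t' : term_ac t t' -> term_ac (tLam t) (tLam t')
| ac_app t t' r r' : term_ac t t' -> term_ac r r' -> term_ac (tApp t r) (tApp t' r')
| ac_scal a t t' : term_ac t t' -> term_ac (tScal a t) (tScal a t')
| ac_plus t t' r r' : term_ac t t' -> term_ac r r' -> term_ac (tPlus t r) (tPlus t' r')
| ac_comm t r : term_ac (tPlus t r) (tPlus r t)
| ac_assoc t r s : term_ac (tPlus t (tPlus r s)) (tPlus (tPlus t r) s).

Inductive ty : Type :=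
| TVar : nat -> ty
| TArr : ty -> ty -> ty
| TAll : ty -> ty
| TScal : R -> ty -> ty
| TZero : ty.

(* isUnit T : T is a unit type  U ::= X | U -> T | forall X. U
   wfTy T   : T is a type       T ::= U | forall X.T | alpha.T | 0bar *)
Fixpoint isUnit (T : ty) : bool :=
  match T with
  | TVar _ => true
  | TArr A B => isUnit A && wfTy B
  | TAll A => isUnit A
  | TScal _ _ => false
  | TZero => false
  end
with wfTy (T : ty) : bool :=
  match T with
  | TVar _ => true
  | TArr A B => isUnit A && wfTy B
  | TAll A => wfTy A
  | TScal _ A => wfTy A
  | TZero => true
  end.

Fixpoint shiftTy (c : nat) (T : ty) : ty :=
  match T with
  | TVar n => if (n < c)%N then TVar n else TVar n.+1
  | TArr A B => TArr (shiftTy c A) (shiftTy c B)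
  | TAll A => TAll (shiftTy c.+1 A)
  | TScal a A => TScal a (shiftTy c A)
  | TZero => TZero
  end.

Definition liftTy (k : nat) (U : ty) : ty := iter k (shiftTy 0) U.

Fixpoint substTy (k : nat) (U : ty) (T : ty) : ty :=
  match T with
  | TVar n => if n == k then liftTy k U
              else if (n < k)%N then TVar n else TVar n.-1
  | TArr A B => TArr (substTy k U A) (substTy k U B)
  | TAll A => TAll (substTy k.+1 U A)
  | TScal a A => TScal a (substTy k U A)
  | TZero => TZero
  end.

Inductive tyeq : ty -> ty -> Prop :=
| eq_refl T : wfTy T -> tyeq T T
| eq_sym T S : tyeq T S -> tyeq S T
| eq_trans T S V : tyeq T S -> tyeq S V -> tyeq T V
| eq_arr U U' T T' : isUnit U -> isUnit U' -> tyeq U U' -> tyeq T T' ->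
    tyeq (TArr U T) (TArr U' T')
| eq_all T T' : tyeq T T' -> tyeq (TAll T) (TAll T')
| eq_scal a T T' : tyeq T T' -> tyeq (TScal a T) (TScal a T')
| eq_scal_zero a : tyeq (TScal a TZero) TZero
| eq_zero_scal T : wfTy T -> tyeq (TScal 0 T) TZero
| eq_one_scal T : wfTy T -> tyeq (TScal 1 T) T
| eq_scal_scal a b T : wfTy T -> tyeq (TScal a (TScal b T)) (TScal (a * b) T)
| eq_all_scal a T : wfTy T -> tyeq (TAll (TScal a T)) (TScal a (TAll T)).

Definition context := seq ty.
Definition isContext (G : context) : bool := all isUnit G.

Inductive typing : context -> term -> ty -> Prop :=
| ty_ac G t t' T : term_ac t t' -> typing G t T -> typing G t' T
| ty_ax G n U : nth TZero G n = U -> (n < size G)%N -> isUnit U ->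
    typing G (tVar n) U
| ty_equiv G t T S : typing G t T -> tyeq T S -> typing G t S
| ty_arrE G t r a b U T : typing G t (TScal a (TArr U T)) ->
    typing G r (TScal b U) -> typing G (tApp t r) (TScal (a * b) T)
| ty_arrI G t U T : isUnit U -> typing (U :: G) t T ->
    typing G (tLam t) (TArr U T)
| ty_allE G t T U : isUnit U -> typing G t (TAll T) ->
    typing G t (substTy 0 U T)
| ty_allI G t T : typing (map (shiftTy 0) G) t T -> typing G t (TAll T)
| ty_zero G : typing G tZero TZero
| ty_plusI G t r a b T : typing G t (TScal a T) -> typing G r (TScal b T) ->
    typing G (tPlus t r) (TScal (a + b) T)
| ty_scalI G t a T : typing G t T -> typing G (tScal a t) (TScal a T).

End Scalar.

From Pilot Require Import Defs.
From mathcomp Require Import all_boot all_algebra.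
Import GRing.Theory.
Set Implicit Arguments. Unset Strict Implicit.

(* Every well-formed type T is equivalent to [tyScalar T].[unitPart T], where
   [tyScalar T] multiplies the scalars of T (0 for the zero type) and
   [unitPart T] is a unit type.  [tyScalar] is invariant under type equivalence
   and under substitution of unit types, and a derivation for [alpha.t] can only
   end with [s_I], [≡], the quantifier rules or AC-rearrangements of the
   subject; hence the scalar of the derived type is a multiple of alpha. *)

Section ScalarTypes.
Variable R : comPzRingType.
Local Open Scope ring_scope.

Lemma unit_wfTy (T : ty R) : isUnit T -> wfTy T.
Proof. by elim: T. Qed.

Lemma tyeq_wfTy (T S : ty R) : tyeq T S -> wfTy T /\ wfTy S.
Proof.
elim=> //=; try by intuition.
by move=> U U' ? ? -> -> _ _ _ [-> ->].
Qed.

Lemma shiftTy_wf (T : ty R) c :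
  (isUnit T -> isUnit (shiftTy c T)) /\ (wfTy T -> wfTy (shiftTy c T)).
Proof.
elim: T c => [n|A IHA B IHB|A IHA|a A IHA|] c //=.
- by case: ifP.
- by have [hA _] := IHA c; have [_ hB] := IHB c; split=> /andP[/hA -> /hB].
- by have [_ hA] := IHA c.
Qed.

Lemma liftTy_unit k (U : ty R) : isUnit U -> isUnit (liftTy k U).
Proof. by elim: k => //= k IH /IH /(shiftTy_wf _ 0).1. Qed.

Lemma substTy_wf (U : ty R) T k : isUnit U ->
  (isUnit T -> isUnit (substTy k U T)) /\ (wfTy T -> wfTy (substTy k U T)).
Proof.
move=> unitU; elim: T k => [n|A IHA B IHB|A IHA|a A IHA|] k //=.
- case: ifP => _; last by case: ifP.
  by have hU := liftTy_unit k unitU; split=> _ //; apply: unit_wfTy.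
- by have [hA _] := IHA k; have [_ hB] := IHB k; split=> /andP[/hA -> /hB].
- by have [_ hA] := IHA k.
Qed.

Lemma typing_wfTy G (t : term R) T : typing G t T -> wfTy T.
Proof.
elim=> //=.
- by move=> ? ? V _ _ /unit_wfTy.
- by move=> ? ? ? ? _ _ /tyeq_wfTy[].
- by move=> ? ? ? ? ? ? ? _ /andP[_ ->].
- by move=> ? ? ? ? -> _ ->.
- by move=> ? ? T0 V hV _ /(substTy_wf T0 0 hV).2.
Qed.

Fixpoint tyScalar (T : ty R) : R :=
  match T with
  | TScal a A => a * tyScalar A
  | TAll A => tyScalar A
  | TZero => 0
  | _ => 1
  end.

(* The zero type is sent to an arbitrary unit type: it is [0.X] for any X. *)
Fixpoint unitPart (T : ty R) : ty R :=
  match T with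
  | TScal _ A => unitPart A
  | TAll A => TAll (unitPart A)
  | TZero => TVar R 0
  | _ => T
  end.

Lemma tyScalar_unit (T : ty R) : isUnit T -> tyScalar T = 1.
Proof. by elim: T. Qed.

Lemma tyScalar_substTy (U : ty R) T k :
  isUnit U -> tyScalar (substTy k U T) = tyScalar T.
Proof.
move=> unitU; elim: T k => [n|A IHA B IHB|A IHA|a A IHA|] k //=.
- case: ifP => _; last by case: ifP.
  by rewrite tyScalar_unit // liftTy_unit.
- by rewrite IHA.
Qed.

Lemma tyScalar_tyeq (T S : ty R) : tyeq T S -> tyScalar T = tyScalar S.
Proof.
elim=> //= *; try congruence.
- by rewrite mulr0.
- by rewrite mul0r.
- by rewrite mul1r.
- by rewrite mulrA.
Qed.

Lemma unitPart_unit (T : ty R) : wfTy T -> isUnit (unitPart T).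
Proof. by elim: T => //= ? IH ? _ /andP[-> ->]. Qed.

Lemma tyeq_scal_unitPart (T : ty R) :
  wfTy T -> tyeq T (TScal (tyScalar T) (unitPart T)).
Proof.
elim: T => [n|A IHA B IHB|A IHA|a A IHA|] /= wfT.
- exact/Defs.eq_sym/eq_one_scal.
- exact/Defs.eq_sym/eq_one_scal.
- apply: Defs.eq_trans (Defs.eq_all (IHA wfT)) _.
  exact/eq_all_scal/unit_wfTy/unitPart_unit.
- apply: Defs.eq_trans (Defs.eq_scal a (IHA wfT)) _.
  exact/eq_scal_scal/unit_wfTy/unitPart_unit.
- exact/Defs.eq_sym/eq_zero_scal.
Qed.

Definition scaledBy (a : R) (t : term R) : bool :=
  if t is tScal b _ then b == a else false.

Lemma term_ac_scaledBy a (t t' : term R) :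
  term_ac t t' -> scaledBy a t = scaledBy a t'.
Proof. by elim=> //= *; congruence. Qed.

Lemma typing_scaledBy_tyScalar G (t : term R) T a :
  typing G t T -> scaledBy a t -> exists g, tyScalar T = a * g.
Proof.
move=> tyT; elim: tyT a => //=.
- by move=> ? ? ? ? acT _ IH a; rewrite -(term_ac_scaledBy a acT); apply: IH.
- by move=> ? ? ? ? _ IH /tyScalar_tyeq <- a /IH.
- by move=> ? ? T0 U unitU _ IH a /IH; rewrite tyScalar_substTy.
- by move=> ? ? a0 ? _ _ a /eqP ->; eexists.
Qed.

End ScalarTypes.

Theorem mainTheorem13 (R : comPzRingType) (G : context R) (a : R)
    (t : term R) (T : ty R) :
  isContext G -> typing G (tScal a t) T ->
  exists (U : ty R) (g : R), isUnit U /\ tyeq T (TScal a (TScal g U)).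
Proof.
move=> _ tyT; have wfT := typing_wfTy tyT.
have [g scalarT] := typing_scaledBy_tyScalar tyT (eqxx a).
exists (unitPart T), g; split; first exact: unitPart_unit.
apply: Defs.eq_trans (tyeq_scal_unitPart wfT) _; rewrite scalarT.
exact/Defs.eq_sym/eq_scal_scal/unit_wfTy/unitPart_unit.
Qed.
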